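(* Let $m\ge 2$ be an integer, let $\alpha_0\in(0,\tfrac{\pi}{2})$ and put $b=\tfrac12\tan\alpha_0>0$, so that $\arg(\tfrac12+bi)=\alpha_0$ and $\arg(\tfrac12-bi)=-\alpha_0$. Let $$S^m_{\alpha_0}=\Big\{z\in\mathbb{C}^m:\ \text{for each }k,\ z_k=0\text{ or }|\arg z_k|\le\alpha_0,\ \ \sum_{k=1}^m z_k=1\Big\}.$$ Then $S^m_{\alpha_0}$ is convex, and its set of extreme points consists of exactly $m^2$ points, namely: (i) the $m$ standard basis vectors $e^1,\dots,e^m$ of $\mathbb{C}^m$, and (ii) the $m(m-1)$ vectors $\eta$ having exactly two nonzero coordinates, one of them equal to $\tfrac12+bi$ and another equal to $\tfrac12-bi$ (one such vector for each ordered pair $(k,l)$ of distinct indices, with $\eta_k=\tfrac12+bi$, $\eta_l=\tfrac12-bi$, and all other coordinates $0$).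
   Context: $\arg$ denotes the principal argument with values in $(-\pi,\pi]$. A point $a$ of a set $S\subseteq\mathbb{C}^m$ is an extreme point if there are no $p,q\in S$ with $p\neq q$ and $\lambda\in(0,1)$ such that $a=\lambda p+(1-\lambda)q$. *)

From HB Require Import structures.
From mathcomp Require Import all_boot all_order all_algebra.
From mathcomp Require Import complex.
From mathcomp Require Import all_classical all_reals all_analysis.
Set Implicit Arguments. Unset Strict Implicit. Unset Printing Implicit Defensive.
Import Order.TTheory GRing.Theory Num.Theory.
Local Open Scope ring_scope.
Local Open Scope classical_set_scope.

Definition is_principal_arg (R : realType) (z : R[i]) (t : R) : Prop :=
  [/\ - pi < t, t <= pi,
      complex.Re z = ComplexField.Normc.normc z * cos t & complex.Im z = ComplexField.Normc.normc z * sin t].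

(* The principal argument arg z (meaningful for z <> 0; unique there). *)
Definition parg (R : realType) (z : R[i]) : R :=
  xget 0 [set t | is_principal_arg z t].

Definition cvx_comb (R : realType) (m : nat) (l : R) (p q : 'rV[R[i]]_m)
  : 'rV[R[i]]_m := (l%:C)%C *: p + ((1 - l)%:C)%C *: q.

Definition convex_setC (R : realType) (m : nat) (S : set 'rV[R[i]]_m) : Prop :=
  forall p q (l : R), S p -> S q -> 0 <= l <= 1 -> S (cvx_comb l p q).

Definition extreme_point (R : realType) (m : nat) (S : set 'rV[R[i]]_m)
  (a : 'rV[R[i]]_m) : Prop :=
  S a /\ ~ (exists p q (l : R), [/\ S p, S q, p <> q, 0 < l < 1 &
                                     a = cvx_comb l p q]).

Definition S_alpha (R : realType) (m : nat) (a0 : R) : set 'rV[R[i]]_m :=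
  [set z | (forall k, z 0 k = 0 \/ `|parg (z 0 k)| <= a0) /\
           \sum_(k < m) z 0 k = 1].

Definition std_e (R : realType) (m : nat) (k : 'I_m) : 'rV[R[i]]_m :=
  \row_j (if j == k then 1 else 0).

Definition eta_vec (R : realType) (m : nat) (b : R) (k l : 'I_m)
  : 'rV[R[i]]_m :=
  \row_j (if j == k then (2^-1 +i* b)%C
          else if j == l then (2^-1 -i* b)%C else 0).

Arguments S_alpha {R} m a0.
Arguments std_e {R m} k.
Arguments eta_vec {R m} b k l.

From HB Require Import structures.
From mathcomp Require Import all_boot all_order all_algebra.
From mathcomp Require Import complex.
From mathcomp Require Import all_classical all_reals all_analysis.
From mathcomp Require Import ring lra.
Import Order.TTheory GRing.Theory Num.Theory.
Local Open Scope ring_scope.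
Local Open Scope classical_set_scope.
Set Implicit Arguments. Unset Strict Implicit. Unset Printing Implicit Defensive.

(* With T = tan a0, the real-linear bijection z |-> (u, v) = (T Re z + Im z, T Re z - Im z)
   of C onto R^2 maps the closed sector {0} U {|arg z| <= a0} onto the quadrant u, v >= 0,
   and maps 1 to (T, T).  Hence coordinatewise it identifies S^m_{a0} with the product of
   two copies of the simplex {w in R^m | w >= 0, sum w = T}.  That set is convex, and its
   extreme points are the pairs of vertices (T e^k, T e^l); pulled back to C^m the pair
   (k, k) is e^k and the pair (k, l) with k <> l is the vector eta of the statement. *)

Section Simplex.
Variables (R : realFieldType) (I : finType) (c : R).

Definition simplex (w : I -> R) := (forall i, 0 <= w i) /\ \sum_i w i = c.

Definition vertex (k : I) (i : I) : R := if i == k then c else 0.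

Lemma sum_vertex k : \sum_i vertex k i = c.
Proof. by rewrite -big_mkcond big_pred1_eq. Qed.

Lemma simplex_vertex k : 0 <= c -> simplex (vertex k).
Proof. by move=> c0; split=> [i|]; [rewrite /vertex; case: ifP | exact: sum_vertex]. Qed.

Lemma vertex_inj : c != 0 -> injective vertex.
Proof.
move=> c0 k l /(congr1 (fun w => w k)); rewrite /vertex eqxx.
by case: eqVneq => [-> //|_] /eqP; rewrite (negbTE c0).
Qed.

Lemma simplex_convex l g h : 0 <= l <= 1 -> simplex g -> simplex h ->
  simplex (fun i => l * g i + (1 - l) * h i).
Proof.
move=> /andP[l0 l1] [g0 sg] [h0 sh]; split=> [i|].
  by rewrite addr_ge0 // mulr_ge0 // subr_ge0.
by rewrite big_split /= -!mulr_sumr sg sh; ring.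
Qed.

Lemma vertex_extreme k l g h : 0 < l < 1 -> simplex g -> simplex h ->
  (forall i, vertex k i = l * g i + (1 - l) * h i) -> g =1 vertex k /\ h =1 vertex k.
Proof.
move=> /andP[l0 l1] [g0 sg] [h0 sh] e.
have off i : i != k -> g i = 0 /\ h i = 0.
  move=> ik; have := e i; rewrite /vertex (negbTE ik) => e0.
  have lg : 0 <= l * g i by rewrite mulr_ge0 ?g0 ?ltW.
  have lh : 0 <= (1 - l) * h i by rewrite mulr_ge0 ?h0 // subr_ge0 ltW.
  have lg0 : l * g i = 0 by lra.
  have lh0 : (1 - l) * h i = 0 by lra.
  move/eqP: lg0; rewrite mulf_eq0 gt_eqF //= => /eqP ->.
  by move/eqP: lh0; rewrite mulf_eq0 subr_eq0 eq_sym lt_eqF //= => /eqP ->.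
have at_k w : (forall i, i != k -> w i = 0) -> \sum_i w i = c -> w k = c.
  by move=> w0 <-; rewrite (bigD1 k) //= big1 ?addr0 // => i /w0.
split=> i; rewrite /vertex; case: eqVneq => [->|ik]; try by case: (off i ik).
- by apply: at_k sg => j /off[].
- by apply: at_k sh => j /off[].
Qed.

Lemma simplex_shift w j k : j != k -> 0 < w j -> 0 < w k -> simplex w ->
  exists2 d : I -> R, d j != 0 & simplex (fun i => w i + d i) /\ simplex (fun i => w i - d i).
Proof.
move=> jk wj wk [w0 sw].
pose e := Num.min (w j) (w k).
have e0 : 0 < e by rewrite lt_min wj wk.
have ej : e <= w j by rewrite ge_min lexx.
have ek : e <= w k by rewrite ge_min lexx orbT.
pose d i := (if i == j then e else 0) - (if i == k then e else 0).
have sd : \sum_i d i = 0.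
  by rewrite sumrB -!big_mkcond !big_pred1_eq subrr.
exists d; first by rewrite /d eqxx (negbTE jk) subr0 gt_eqF.
have dP i : `|d i| <= w i.
  rewrite /d; case: eqVneq => [->|ij]; first by rewrite (negbTE jk) subr0 gtr0_norm.
  case: eqVneq => [->|_]; first by rewrite sub0r normrN gtr0_norm.
  by rewrite subrr normr0.
split; split=> [i|].
- by have := dP i; rewrite ler_norml; lra.
- by rewrite big_split /= sw sd addr0.
- by have := dP i; rewrite ler_norml; lra.
- by rewrite sumrB sw sd subr0.
Qed.

Lemma simplex_single_support w : c != 0 -> simplex w ->
  (forall j k, j != k -> w j = 0 \/ w k = 0) -> exists k, w =1 vertex k.
Proof.
move=> c0 [_ sw] hw.
have [k wk] : exists k, w k != 0.
  apply/not_existsP => w0; move/eqP: c0; apply.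
  by rewrite -sw big1 // => i _; move: (w0 i); case: eqP.
have off i : i != k -> w i = 0.
  by move=> ik; case: (hw i k ik) => // wk0; rewrite wk0 eqxx in wk.
exists k => i; rewrite /vertex; case: eqVneq => [->|/off //].
by rewrite -sw (bigD1 k) //= big1 ?addr0 // => j /off.
Qed.

Lemma simplex_vertex_or_shift w : c != 0 -> simplex w ->
  (exists k, w =1 vertex k) \/
  exists j, exists2 d : I -> R, d j != 0 &
    simplex (fun i => w i + d i) /\ simplex (fun i => w i - d i).
Proof.
move=> c0 sw; have [[j [k [jk wj wk]]]|none] :=
  pselect (exists j k, [/\ j != k, 0 < w j & 0 < w k]).
  by right; exists j; exact: simplex_shift jk wj wk sw.
left; apply: simplex_single_support => // j k jk.
have [w0 _] := sw; have [|wj] := eqVneq (w j) 0; [by left | right].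
apply/eqP; rewrite eq_le w0 andbT leNgt; apply/negP => wk.
by apply: none; exists j, k; split => //; rewrite lt_neqAle eq_sym wj w0.
Qed.

End Simplex.

Section UVCoordinates.
Variables (R : realType) (T : R).
Hypothesis T_neq0 : T != 0.
Local Open Scope complex_scope.

Definition ucoord (z : R[i]) : R := T * complex.Re z + complex.Im z.
Definition vcoord (z : R[i]) : R := T * complex.Re z - complex.Im z.
Definition of_uv (u v : R) : R[i] := ((u + v) / (2 * T)) +i* ((u - v) / 2).

Lemma ucoord_of_uv u v : ucoord (of_uv u v) = u.
Proof. by rewrite /ucoord /=; field. Qed.

Lemma vcoord_of_uv u v : vcoord (of_uv u v) = v.
Proof. by rewrite /vcoord /=; field. Qed.

Lemma of_uvK z : of_uv (ucoord z) (vcoord z) = z.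
Proof. by case: z => a b; rewrite /ucoord /vcoord /of_uv /=; congr (_ +i* _); field. Qed.

Lemma uv_inj x y : ucoord x = ucoord y -> vcoord x = vcoord y -> x = y.
Proof. by move=> ux vx; rewrite -[x]of_uvK -[y]of_uvK ux vx. Qed.

Lemma ucoord_comb l x y :
  ucoord (l%:C * x + (1 - l)%:C * y) = l * ucoord x + (1 - l) * ucoord y.
Proof. by case: x; case: y => a b c d; rewrite /ucoord /=; ring. Qed.

Lemma vcoord_comb l x y :
  vcoord (l%:C * x + (1 - l)%:C * y) = l * vcoord x + (1 - l) * vcoord y.
Proof. by case: x; case: y => a b c d; rewrite /vcoord /=; ring. Qed.

Lemma ucoord_sum (I : finType) (f : I -> R[i]) : ucoord (\sum_i f i) = \sum_i ucoord (f i).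
Proof.
apply: (big_morph _ _ (_ : ucoord 0 = 0)); last by rewrite /ucoord /=; ring.
by case=> a b [c d]; rewrite /ucoord /=; ring.
Qed.

Lemma vcoord_sum (I : finType) (f : I -> R[i]) : vcoord (\sum_i f i) = \sum_i vcoord (f i).
Proof.
apply: (big_morph _ _ (_ : vcoord 0 = 0)); last by rewrite /vcoord /=; ring.
by case=> a b [c d]; rewrite /vcoord /=; ring.
Qed.

Lemma eq1_uv z : z = 1 <-> ucoord z = T /\ vcoord z = T.
Proof.
have [u1 v1] : ucoord 1 = T /\ vcoord 1 = T by rewrite /ucoord /vcoord /=; split; ring.
by split=> [->|[uz vz]] //; apply: uv_inj; rewrite ?u1 ?v1.
Qed.

End UVCoordinates.

Section SimplexPair.
Variables (R : realType) (m : nat) (T : R).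
Hypothesis T_gt0 : 0 < T.
Local Notation T_neq0 := (lt0r_neq0 T_gt0).

Definition ucoords (a : 'rV[R[i]]_m) (i : 'I_m) : R := ucoord T (a 0 i).
Definition vcoords (a : 'rV[R[i]]_m) (i : 'I_m) : R := vcoord T (a 0 i).
Definition row_of_uv (u v : 'I_m -> R) : 'rV[R[i]]_m := \row_i of_uv T (u i) (v i).
Definition vertex_row (k l : 'I_m) : 'rV[R[i]]_m := row_of_uv (vertex T k) (vertex T l).

Definition simplex_pair : set 'rV[R[i]]_m :=
  [set a | simplex T (ucoords a) /\ simplex T (vcoords a)].

Lemma ucoords_row_of_uv u v : ucoords (row_of_uv u v) =1 u.
Proof. by move=> i; rewrite /ucoords mxE (ucoord_of_uv T_neq0). Qed.

Lemma vcoords_row_of_uv u v : vcoords (row_of_uv u v) =1 v.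
Proof. by move=> i; rewrite /vcoords mxE (vcoord_of_uv T_neq0). Qed.

Lemma row_uv_inj a b : ucoords a =1 ucoords b -> vcoords a =1 vcoords b -> a = b.
Proof. by move=> ua va; apply/rowP => i; apply: (uv_inj T_neq0 (ua i) (va i)). Qed.

Lemma ucoords_cvx_comb l p q i :
  ucoords (cvx_comb l p q) i = l * ucoords p i + (1 - l) * ucoords q i.
Proof. by rewrite /ucoords !mxE ucoord_comb. Qed.

Lemma vcoords_cvx_comb l p q i :
  vcoords (cvx_comb l p q) i = l * vcoords p i + (1 - l) * vcoords q i.
Proof. by rewrite /vcoords !mxE vcoord_comb. Qed.

Lemma row_of_uv_simplex_pair u v :
  simplex T u -> simplex T v -> simplex_pair (row_of_uv u v).
Proof.
rewrite /simplex_pair /= (funext (ucoords_row_of_uv _ _)).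
by rewrite (funext (vcoords_row_of_uv _ _)).
Qed.

Lemma simplex_pair_convex : convex_setC simplex_pair.
Proof.
move=> p q l [up vp] [uq vq] l01; split.
  by rewrite (funext (ucoords_cvx_comb l p q)); apply: simplex_convex.
by rewrite (funext (vcoords_cvx_comb l p q)); apply: simplex_convex.
Qed.

Lemma vertex_row_extreme k l : extreme_point simplex_pair (vertex_row k l).
Proof.
have T_ge0 := ltW T_gt0.
split; first by apply: row_of_uv_simplex_pair; apply: simplex_vertex.
case=> p [q [t [[up vp] [uq vq] pq t01 e]]]; apply: pq.
have [pu qu] : ucoords p =1 vertex T k /\ ucoords q =1 vertex T k.
  apply: (vertex_extreme t01 up uq) => i.
  by rewrite -ucoords_cvx_comb -e ucoords_row_of_uv.
have [pv qv] : vcoords p =1 vertex T l /\ vcoords q =1 vertex T l.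
  apply: (vertex_extreme t01 vp vq) => i.
  by rewrite -vcoords_cvx_comb -e vcoords_row_of_uv.
by apply: row_uv_inj => i; rewrite ?pu ?qu ?pv ?qv.
Qed.

Lemma extreme_point_shift_eq0 a d e : extreme_point simplex_pair a ->
  simplex T (fun i => ucoords a i + d i) -> simplex T (fun i => ucoords a i - d i) ->
  simplex T (fun i => vcoords a i + e i) -> simplex T (fun i => vcoords a i - e i) ->
  forall i, d i = 0 /\ e i = 0.
Proof.
move=> [_ ext] ud1 ud2 ve1 ve2.
pose p := row_of_uv (fun i => ucoords a i + d i) (fun i => vcoords a i + e i).
pose q := row_of_uv (fun i => ucoords a i - d i) (fun i => vcoords a i - e i).
have pq : p = q.
  apply: contrapT => pq; apply: ext; exists p, q, 2^-1.
  split; try exact: row_of_uv_simplex_pair; first exact: pq.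
  - by apply/andP; split; lra.
  - apply: row_uv_inj => i.
      by rewrite ucoords_cvx_comb !ucoords_row_of_uv; field.
    by rewrite vcoords_cvx_comb !vcoords_row_of_uv; field.
move=> i; have := ucoords_row_of_uv (fun i => ucoords a i + d i) (fun i => vcoords a i + e i) i.
have := vcoords_row_of_uv (fun i => ucoords a i + d i) (fun i => vcoords a i + e i) i.
rewrite -/p pq ucoords_row_of_uv vcoords_row_of_uv.
split; lra.
Qed.

Lemma extreme_vertex_row a :
  extreme_point simplex_pair a -> exists k l, a = vertex_row k l.
Proof.
move=> ext; have [[ua va] _] := ext.
have simplex_add0 (w : 'I_m -> R) : simplex T w -> simplex T (fun i => w i + 0).
  by rewrite (_ : (fun i => _) = w) // funeqE => i; rewrite addr0.
have simplex_sub0 (w : 'I_m -> R) : simplex T w -> simplex T (fun i => w i - 0).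
  by rewrite (_ : (fun i => _) = w) // funeqE => i; rewrite subr0.
have [[k uk]|[j [d dj [ud1 ud2]]]] := simplex_vertex_or_shift T_neq0 ua; last first.
  have [dj0 _] := extreme_point_shift_eq0 (e := fun=> 0) ext ud1 ud2
    (simplex_add0 _ va) (simplex_sub0 _ va) j.
  by rewrite dj0 eqxx in dj.
have [[l vl]|[j [e ej [ve1 ve2]]]] := simplex_vertex_or_shift T_neq0 va; last first.
  have [_ ej0] := extreme_point_shift_eq0 (d := fun=> 0) ext (simplex_add0 _ ua)
    (simplex_sub0 _ ua) ve1 ve2 j.
  by rewrite ej0 eqxx in ej.
by exists k, l; apply: row_uv_inj => i; rewrite ?ucoords_row_of_uv ?vcoords_row_of_uv.
Qed.

Lemma vertex_rowE k l :
  vertex_row k l = if k == l then std_e k else eta_vec (T / 2) k l.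
Proof.
have complex_eq (x y : R[i]) :
    complex.Re x = complex.Re y -> complex.Im x = complex.Im y -> x = y.
  by case: x; case: y => /= ? ? ? ? -> ->.
have T0 := T_neq0; apply/rowP => i; rewrite /vertex_row /row_of_uv /vertex /of_uv.
case: eqVneq => [<-|kl]; rewrite !mxE.
  by case: eqVneq => _; apply: complex_eq => /=; field.
case: eqVneq => [->|ik]; first by rewrite (negbTE kl); apply: complex_eq => /=; field.
by case: eqVneq => _; apply: complex_eq => /=; field.
Qed.

Lemma vertex_row_inj : injective (fun kl : 'I_m * 'I_m => vertex_row kl.1 kl.2).
Proof.
move=> [k l] [k' l'] /= e.
have uE i j : ucoords (vertex_row i j) = vertex T i := funext (ucoords_row_of_uv _ _).
have vE i j : vcoords (vertex_row i j) = vertex T j := funext (vcoords_row_of_uv _ _).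
have /(vertex_inj T_neq0) -> := etrans (esym (uE k l)) (etrans (congr1 ucoords e) (uE k' l')).
by have /(vertex_inj T_neq0) -> := etrans (esym (vE k l)) (etrans (congr1 vcoords e) (vE k' l')).
Qed.

Lemma extreme_points_simplex_pair :
  [set a | extreme_point simplex_pair a] = [set vertex_row kl.1 kl.2 | kl in [set: 'I_m * 'I_m]].
Proof.
apply/seteqP; split=> a /=.
  by move=> /extreme_vertex_row[k [l ->]]; exists (k, l).
by move=> [[k l] _ <-]; exact: vertex_row_extreme.
Qed.

End SimplexPair.

Section Sector.
Variable R : realType.
Local Notation normc := (@ComplexField.Normc.normc R).
Implicit Types (z : R[i]) (t a : R).

Lemma normc_gt0 z : z != 0 -> 0 < normc z.
Proof.
case: z => a b z0; rewrite /= lt_neqAle sqrtr_ge0 andbT eq_sym.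
by apply: contra z0 => /eqP/(@ComplexField.Normc.eq0_normc R (a +i* b)%C) ->.
Qed.

Lemma principal_arg_exists z : z != 0 -> exists t, is_principal_arg z t.
Proof.
move=> z0; have n0 := normc_gt0 z0; set n := normc z in n0.
set c := complex.Re z / n; set s := complex.Im z / n.
have hRe : complex.Re z = n * c by rewrite /c mulrC divfK // gt_eqF.
have hIm : complex.Im z = n * s by rewrite /s mulrC divfK // gt_eqF.
have cs1 : c ^+ 2 + s ^+ 2 = 1.
  have n2 : n ^+ 2 = complex.Re z ^+ 2 + complex.Im z ^+ 2.
    by rewrite /n; case: (z) => a b /=; rewrite sqr_sqrtr // addr_ge0 ?sqr_ge0.
  by rewrite /c /s !expr_div_n -mulrDl -n2 divff // expf_neq0 // gt_eqF.
have c1 : -1 <= c <= 1.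
  have : c ^+ 2 <= 1 by rewrite -cs1 lerDl sqr_ge0.
  by move=> ?; apply/andP; split; nra.
have s2 : Num.sqrt (1 - c ^+ 2) = `|s| by rewrite -sqrtr_sqr; congr Num.sqrt; lra.
have pi0 : 0 < pi :> R := pi_gt0 R.
have [s0|s0] := leP 0 s.
  exists (acos c); split.
  - by have := acos_ge0 c1; lra.
  - exact: acos_lepi.
  - by rewrite acosK // in_itv.
  - by rewrite sin_acos // s2 ger0_norm.
have cN1 : -1 < c.
  rewrite lt_neqAle (proj1 (andP c1)) andbT eq_sym; apply/eqP => c_1.
  by rewrite c_1 in cs1; nra.
exists (- acos c); split.
- by rewrite ltrN2 acos_ltpi // cN1; case/andP: c1.
- by have := acos_ge0 c1; lra.
- by rewrite cosN acosK // in_itv.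
- by rewrite sinN sin_acos // s2 ltr0_norm // opprK.
Qed.

Lemma parg_principal z : z != 0 -> is_principal_arg z (parg z).
Proof. by move=> /principal_arg_exists[t Pt]; exact: (xgetPex (0 : R) (ex_intro _ t Pt)). Qed.

Lemma tan_gt0_pihalf a : 0 < a < pi / 2 -> 0 < tan a.
Proof.
move=> /andP[a0 a1]; have pi0 : 0 < pi :> R := pi_gt0 R.
rewrite divr_gt0 ?sin_gt0_pihalf ?a0 //.
by rewrite cos_gt0_pihalf // a1 andbT; lra.
Qed.

Lemma norm_lt_pihalf t : - pi < t <= pi -> 0 < cos t -> `|t| < pi / 2.
Proof.
move=> /andP[t1 t2] ct; have pi0 : 0 < pi :> R := pi_gt0 R.
have tpi : `|t| <= pi by rewrite ler_norml t2 andbT ltW.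
rewrite -(@ltr_cos R `|t| (pi / 2)) ?in_itv /= ?normr_ge0 ?tpi //.
  by rewrite cos_pihalf cos_norm.
by rewrite divr_ge0 ?ltW //=; lra.
Qed.

Lemma sin_norm t : `|t| <= pi -> sin `|t| = `|sin t|.
Proof.
move=> tpi; have [t0|t0] := leP 0 t.
  by rewrite !ger0_norm // sin_ge0_pi // t0 -(ger0_norm t0).
rewrite ltr0_norm // -[in RHS]normrN -sinN ger0_norm // sin_ge0_pi //.
by rewrite -(ltr0_norm t0) tpi normr_ge0.
Qed.

Lemma abs_le_tan_iff a t : 0 < a < pi / 2 -> - pi < t <= pi ->
  (`|t| <= a) = (`|sin t| <= tan a * cos t).
Proof.
move=> a_range t_range; have /andP[a0 a1] := a_range.
have pi0 : 0 < pi :> R := pi_gt0 R; have tan0 := tan_gt0_pihalf a_range.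
have [ct|ct] := ltP 0 (cos t).
  have tpi2 := norm_lt_pihalf t_range ct.
  have tant : `|sin t| / cos t = tan `|t|.
    by rewrite /tan cos_norm sin_norm //; lra.
  have := normr_ge0 t => t0.
  by rewrite -ler_pdivrMr // tant !leNgt ltr_tan // !in_itv /=; apply/andP; split; lra.
apply/idP/idP => [ta|st]; exfalso.
  have : 0 < cos t by rewrite -cos_norm cos_gt0_pihalf //; have := normr_ge0 t; lra.
  by lra.
have ct0 : cos t = 0.
  apply/eqP; rewrite eq_le ct /= -(pmulr_rge0 _ tan0).
  by have := normr_ge0 (sin t); lra.
have st0 : sin t = 0.
  by apply/normr0_eq0; rewrite ct0 mulr0 in st; have := normr_ge0 (sin t); lra.
by have := cos2Dsin2 t; rewrite ct0 st0 expr0n /= addr0 => /esym/eqP; rewrite oner_eq0.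
Qed.

Lemma sector_iff a z : 0 < a < pi / 2 ->
  (z = 0 \/ `|parg z| <= a) <-> `|complex.Im z| <= tan a * complex.Re z.
Proof.
move=> a_range; have tan0 := tan_gt0_pihalf a_range.
have [->|z0] := eqVneq z 0.
  by rewrite /= normr0 mulr0; split=> // _; left.
have [t1 t2 hRe hIm] := parg_principal z0.
have n0 := normc_gt0 z0.
rewrite abs_le_tan_iff ?t1 ?t2 // hRe hIm normrM gtr0_norm // mulrCA ler_pM2l //.
split; last by right.
by case=> // /eqP; rewrite (negbTE z0).
Qed.

End Sector.

Lemma S_alpha_simplex_pair (R : realType) (m : nat) (a : R) : 0 < a < pi / 2 ->
  S_alpha m a = simplex_pair (tan a) :> set 'rV[R[i]]_m.
Proof.
move=> a_range; have T0 := lt0r_neq0 (tan_gt0_pihalf a_range).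
apply/seteqP; split=> z [cone sum1].
  have [su sv] := (eq1_uv T0 (\sum_(k < m) z 0 k)).1 sum1.
  rewrite ucoord_sum in su; rewrite vcoord_sum in sv.
  by split; split=> // k; have := (sector_iff _ a_range).1 (cone k);
    rewrite ler_norml /ucoords /ucoord /vcoords /vcoord; lra.
split=> [k|].
  apply/(sector_iff _ a_range); rewrite ler_norml.
  by have := cone.1 k; have := sum1.1 k; rewrite /ucoords /ucoord /vcoords /vcoord; lra.
by apply/(eq1_uv T0); rewrite ucoord_sum vcoord_sum; split; [exact: cone.2 | exact: sum1.2].
Qed.

Lemma card_setT_finType (T : finType) : ([set: T] #= `I_#|T|)%card.
Proof.
rewrite card_eq_sym; apply: (card_eq_trans card_II).
rewrite (_ : [set: 'I_#|T|] = enum_rank @` [set: T]).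
  by apply: inj_card_eq; apply: in2W; exact: enum_rank_inj.
by apply/seteqP; split=> // i _; exists (enum_val i) => //; exact: enum_valK.
Qed.

Theorem theorem3p1 (R : realType) (m : nat) (a0 : R) :
  (2 <= m)%N -> 0 < a0 < pi / 2 ->
  let b := tan a0 / 2 in
  convex_setC (S_alpha m a0) /\
  [set a | extreme_point (S_alpha m a0) a] =
    [set a | (exists k : 'I_m, a = std_e k) \/
             (exists k l : 'I_m, k != l /\ a = eta_vec b k l)] /\
  ([set a | extreme_point (S_alpha m a0) a] #= `I_((m ^ 2)%N))%card.
Proof.
move=> _ a_range b; have T0 := tan_gt0_pihalf a_range.
rewrite S_alpha_simplex_pair // extreme_points_simplex_pair //.
split; first exact: simplex_pair_convex.
split.
  apply/seteqP; split=> a /=.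
    move=> [[k l] _ <-]; rewrite vertex_rowE //=.
    by case: (eqVneq k l) => [->|kl]; [left; exists l | right; exists k, l].
  case=> [[k ->]|[k [l [kl ->]]]]; [exists (k, k) | exists (k, l)] => //=;
    by rewrite vertex_rowE // ?eqxx // (negbTE kl).
have -> : (m ^ 2)%N = #|{: 'I_m * 'I_m}| by rewrite card_prod card_ord mulnn.
apply: card_eq_trans (card_setT_finType _).
by apply: inj_card_eq; apply: in2W; exact: vertex_row_inj.
Qed.
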